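(* Let $\bar x=1/x$ and let $Y=Y(t;x)$ be the unique formal power series in $t$ (with coefficients in $\mathbb{Q}[x,\bar x]$) satisfying $$Y=t(1+\bar x)(1+Y)(x+Y).$$ Let $$R(x,Y)=Y(x+1-\bar x^{5}-\bar x^{6})+Y^2(\bar x^{5}-\bar x)+Y^3(\bar x^{3}+\bar x^{6}-\bar x-\bar x^{4})+Y^4(\bar x^{3}-\bar x^{5}).$$ Then the series $E(u,v)$ defined below satisfies $$E(1+x,1+x)=\mathop{\mathrm{PT}}_{x}R(x,Y),$$ where $\mathop{\mathrm{PT}}_x$ extracts the non-negative powers of $x$ in a series of $\mathbb{Q}[x,\bar x][[t]]$.
   Context: $\mathbf{I}_n(\geq,\geq,-)$ is the set of inversion sequences $e=(e_1,\ldots,e_n)$ ($0\leq e_i<i$) with no $i<j<k$ such that $e_i\geq e_j\geq e_k$. An entry $e_i$ is a left-to-right maximum if $e_i>e_j$ for all $j<i$. Let $\alpha(e)=\max_i e_i$ and $\beta(e)$ the largest element of $\{e_i: e_i\text{ not a left-to-right maximum}\}\cup\{-1\}$; the parameters of $e$ are $(p,q)=(\alpha(e)-\beta(e),\,n-\alpha(e))$. Define $E(u,v)=\sum_{n\geq1}\sum_{e\in\mathbf{I}_n(\geq,\geq,-)}u^{p(e)}v^{q(e)}t^n$, where $(p(e),q(e))$ are the parameters of $e$; it is the series solution of $\bigl(1+\frac{tv}{1-u}+\frac{tv}{1-v/u}\bigr)E(u,v)=tuv+\frac{tv}{1-u}E(1,v)+\frac{tv}{1-v/u}E(u,u)$.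 *)

From HB Require Import structures.
From mathcomp Require Import all_boot all_order all_algebra fraction.
Set Implicit Arguments.
Unset Strict Implicit.
Unset Printing Implicit Defensive.
Import Order.TTheory GRing.Theory Num.Theory.
Local Open Scope ring_scope.

(* Q[x, xbar] is embedded in F = Q(x); series in t are functions nat -> F
   (n |-> coefficient of t^n). *)
Notation F := {fraction {poly rat}}.
Definition toF (p : {poly rat}) : F := FracField.tofrac p.
Definition xF : F := toF 'X.
Definition xbF : F := xF^-1.

Definition series := nat -> F.
Definition sconst (c : F) : series := fun n => if n is 0 then c else 0.
Definition sadd (a b : series) : series := fun n => a n + b n.
Definition sscale (c : F) (a : series) : series := fun n => c * a n.
Definition smul (a b : series) : series :=
  fun n => \sum_(i < n.+1) a i * b (n - i)%N.
Definition stimes_t (a : series) : series :=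
  fun n => if n is m.+1 then a m else 0.

Definition Y_eq (Y : series) : Prop :=
  forall n, Y n = stimes_t (sscale (1 + xbF)
                   (smul (sadd (sconst 1) Y) (sadd (sconst xF) Y))) n.

Definition Rser (Y : series) : series :=
  let Y2 := smul Y Y in let Y3 := smul Y2 Y in let Y4 := smul Y3 Y in
  sadd (sadd (sscale (xF + 1 - xbF ^+ 5 - xbF ^+ 6) Y)
             (sscale (xbF ^+ 5 - xbF) Y2))
       (sadd (sscale (xbF ^+ 3 + xbF ^+ 6 - xbF - xbF ^+ 4) Y3)
             (sscale (xbF ^+ 3 - xbF ^+ 5) Y4)).

(* PT_x: p is the non-negative part of f, i.e. f = p + xbar * q(xbar)
   for some polynomial q (f a Laurent polynomial). *)
Definition is_PT (f : F) (p : {poly rat}) : Prop :=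
  exists q : {poly rat}, f = toF p + xbF * (map_poly (fun c : rat => toF c%:P) q).[xbF].

(* e = (e_0,...,e_{n-1}) with 0 <= e_i <= i  (i.e. e_{i+1} < i+1 in 1-indexing) *)
Definition is_invseq (n : nat) (e : {ffun 'I_n -> 'I_n}) : bool :=
  [forall i : 'I_n, (e i <= i)%N].

(* avoids the pattern (>=,>=,-): no i<j<k with e_i >= e_j >= e_k *)
Definition avoids_gege (n : nat) (e : {ffun 'I_n -> 'I_n}) : bool :=
  [forall i : 'I_n, forall j : 'I_n, forall k : 'I_n,
     ((i < j)%N && (j < k)%N) ==> ~~ ((e j <= e i)%N && (e k <= e j)%N)].

Definition ltrmax (n : nat) (e : {ffun 'I_n -> 'I_n}) (i : 'I_n) : bool :=
  [forall j : 'I_n, (j < i)%N ==> (e j < e i)%N].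

Definition alpha (n : nat) (e : {ffun 'I_n -> 'I_n}) : nat :=
  \max_(i : 'I_n) (e i : nat).
(* beta(e) + 1, where beta(e) = max of non-LTR-max values, or -1 *)
Definition beta1 (n : nat) (e : {ffun 'I_n -> 'I_n}) : nat :=
  \max_(i : 'I_n | ~~ ltrmax e i) (e i).+1.
(* parameters: p = alpha - beta = (alpha+1) - (beta+1) (>= 1), q = n - alpha *)
Definition par_p (n : nat) (e : {ffun 'I_n -> 'I_n}) : nat :=
  ((alpha e).+1 - beta1 e)%N.
Definition par_q (n : nat) (e : {ffun 'I_n -> 'I_n}) : nat :=
  (n - alpha e)%N.

(* [t^n] E(u,v) as a bivariate polynomial: outer variable u, inner v. *)
Definition Ecoef (n : nat) : {poly {poly rat}} :=
  \sum_(e : {ffun 'I_n -> 'I_n} | [&& (0 < n)%N, is_invseq e & avoids_gege e])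
     ('X ^+ par_p e * ('X ^+ par_q e)%:P).

(* evaluation P(a, b) of a bivariate polynomial at polynomials a (for u), b (for v) *)
Definition eval2 (P : {poly {poly rat}}) (a b : {poly rat}) : {poly rat} :=
  (map_poly (fun c : {poly rat} => c \Po b) P).[a].

(* Deleting the last entry of a sequence in I_(n+1)(>=,>=,-) leaves a sequence
   e in I_n(>=,>=,-), and the deleted entry k can be any value with
   beta(e) < k <= n.  Summing the two resulting geometric series in k gives the
   functional equation for E, which we use coefficientwise in t.
   Multiplied by (1-u)(u-v), its kernel becomes
   (1-u)(u-v) + tv(u-v) + tuv(1-u), which at u = 1+a, v = (1+a)(1+b) equals
   (1+a)(ab - t(1+a)(1+b)(a+b)).  For every pair (a,b) cancelling the second
   factor we get b E(1,v) + a E(1+a,1+a) = ab(1+a); as v is symmetric in a and b,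
   exchanging them eliminates E(1,v):
     a^2 E(1+a,1+a) - b^2 E(1+b,1+b) = ab (a(1+a) - b(1+b)).
   The pairs (x,Y), (Y,xbar Y) and (xbar Y,xbar) all cancel it, and adding the
   three identities gives x^2 E(1+x,1+x) - xbar^2 E(1+xbar,1+xbar) = x^2 R(x,Y).
   Hence R(x,Y) = E(1+x,1+x) - xbar^4 E(1+xbar,1+xbar); the first term is a
   series in t with coefficients in Q[x], the second one has coefficients in
   xbar Q[xbar], which gives the non-negative part of R(x,Y). *)

From mathcomp Require Import all_boot all_order all_algebra fraction.
From mathcomp Require Import ring zify.
Import GRing.Theory.
Set Implicit Arguments.
Unset Strict Implicit.
Unset Printing Implicit Defensive.

Local Open Scope ring_scope.

(** * Inversion sequences by their last entry *)

Lemma negb_ltrmax n (e : {ffun 'I_n -> 'I_n}) j :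
  ~~ ltrmax e j = [exists i : 'I_n, (i < j)%N && (e j <= e i)%N].
Proof.
rewrite /ltrmax negb_forall; apply: eq_existsb => i.
by rewrite negb_imply -leqNgt.
Qed.

Lemma beta1_leqP n (e : {ffun 'I_n -> 'I_n}) k :
  reflect (forall i j : 'I_n, (i < j)%N -> (e j <= e i)%N -> (e j < k)%N)
          (beta1 e <= k)%N.
Proof.
apply: (iffP (bigmax_leqP _ _ _)) => h.
- move=> i j lt_ij le_ji; apply: h; rewrite negb_ltrmax.
  by apply/existsP; exists i; rewrite lt_ij.
- by move=> j; rewrite negb_ltrmax => /existsP[i /andP[]]; apply: h.
Qed.

Lemma avoids_gegeP n (e : {ffun 'I_n -> 'I_n}) :
  reflect (forall i j l : 'I_n, (i < j)%N -> (j < l)%N ->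
             ~~ ((e j <= e i)%N && (e l <= e j)%N))
          (avoids_gege e).
Proof.
apply: (iffP forallP) => h.
- move=> i j l lt_ij lt_jl.
  by move/forallP/(_ j)/forallP/(_ l): (h i); rewrite lt_ij lt_jl.
- move=> i; apply/forallP => j; apply/forallP => l.
  by apply/implyP => /andP[]; apply: h.
Qed.

Section Snoc.
Variable n : nat.
Implicit Types (e : {ffun 'I_n -> 'I_n}) (k : 'I_n.+1).

Definition snoc e k : {ffun 'I_n.+1 -> 'I_n.+1} :=
  [ffun i => if unlift ord_max i is Some j then lift ord_max (e j) else k].

Lemma snoc_lift e k j : snoc e k (lift ord_max j) = lift ord_max (e j).
Proof. by rewrite ffunE liftK. Qed.

Lemma snoc_max e k : snoc e k ord_max = k.
Proof. by rewrite ffunE unlift_none. Qed.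

Lemma invseq_snoc e k : is_invseq (snoc e k) = is_invseq e.
Proof.
apply/forallP/forallP => h i.
- by have := h (lift ord_max i); rewrite snoc_lift !lift_max.
- case: (unliftP ord_max i) => [j ->|->]; first by rewrite snoc_lift !lift_max.
  by rewrite snoc_max /= -ltnS.
Qed.

Lemma ltrmax_snoc_lift e k j : ltrmax (snoc e k) (lift ord_max j) = ltrmax e j.
Proof.
apply/forallP/forallP => h i.
- by have := h (lift ord_max i); rewrite !snoc_lift !lift_max.
- apply/implyP; case: (unliftP ord_max i) => [i' ->|->].
  + by rewrite !snoc_lift !lift_max; apply/implyP.
  + by rewrite lift_max /= ltnNge ltnW.
Qed.

Lemma ltrmax_snoc_max e k : ltrmax (snoc e k) ord_max = [forall j, (e j < k)%N].
Proof.
apply/forallP/forallP => h j.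
- by have := h (lift ord_max j); rewrite snoc_lift snoc_max !lift_max /= ltn_ord.
- apply/implyP; case: (unliftP ord_max j) => [j' ->|->]; last by rewrite ltnn.
  by rewrite snoc_lift snoc_max !lift_max => _; apply: h.
Qed.

Lemma alpha_ltE e m : (0 < n)%N -> (alpha e < m)%N = [forall j, (e j < m)%N].
Proof.
move=> n_gt0; apply/idP/forallP => [lt_am j|h].
- by apply: leq_ltn_trans lt_am; apply: leq_bigmax.
- (* [bigop.eq_bigmax] is the [nat] version, shadowed by the one of [order] *)
  by have [j ->] : {j | alpha e = e j} by apply: bigop.eq_bigmax; rewrite card_ord.
Qed.

Lemma widen_lift_max (i : 'I_n) : widen_ord (leqnSn n) i = lift ord_max i.
Proof. by apply: ord_inj; rewrite lift_max. Qed.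

Lemma alpha_snoc e k : alpha (snoc e k) = maxn (alpha e) k.
Proof.
rewrite /alpha big_ord_recr /= snoc_max; congr maxn.
by apply: eq_bigr => i _; rewrite widen_lift_max snoc_lift lift_max.
Qed.

Lemma beta1_snoc e k : (0 < n)%N ->
  beta1 (snoc e k) = maxn (beta1 e) (if (alpha e < k)%N then 0 else k.+1).
Proof.
move=> n_gt0; rewrite /beta1 big_mkcond big_ord_recr /= -big_mkcond.
rewrite ltrmax_snoc_max -alpha_ltE // snoc_max if_neg; congr maxn.
by apply: eq_big => [i|i _]; rewrite widen_lift_max ?ltrmax_snoc_lift ?snoc_lift ?lift_max.
Qed.

Lemma avoids_snoc e k : avoids_gege (snoc e k) = avoids_gege e && (beta1 e <= k)%N.
Proof.
apply/avoids_gegeP/andP => [h|[/avoids_gegeP avoid_e /beta1_leqP beta1_k]].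
- split.
  + apply/avoids_gegeP => i j l lt_ij lt_jl.
    by have := h (lift ord_max i) (lift ord_max j) (lift ord_max l);
      rewrite !snoc_lift !lift_max; apply.
  + apply/beta1_leqP => i j lt_ij le_ji; rewrite ltnNge; apply/negP => le_kj.
    have := h (lift ord_max i) (lift ord_max j) ord_max.
    by rewrite !snoc_lift snoc_max !lift_max /= ltn_ord le_ji le_kj => /(_ lt_ij isT).
- move=> i j l lt_ij lt_jl.
  case: (unliftP ord_max j) lt_ij lt_jl => [j' ->|->]; last first.
    by move=> _; rewrite ltnNge -ltnS ltn_ord.
  case: (unliftP ord_max i) => [i' ->|->]; last by rewrite lift_max ltnNge ltnW.
  case: (unliftP ord_max l) => [l' ->|->] lt_ij lt_jl.
  + by rewrite !snoc_lift !lift_max in lt_ij lt_jl *; apply: avoid_e.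
  + rewrite !snoc_lift snoc_max !lift_max in lt_ij *.
    by apply/negP => /andP[le_ji le_kj]; have := beta1_k _ _ lt_ij le_ji; rewrite ltnNge le_kj.
Qed.

Definition unsnoc (f : {ffun 'I_n.+1 -> 'I_n.+1}) : {ffun 'I_n -> 'I_n} :=
  [ffun j => insubd j (f (lift ord_max j) : nat)].

Lemma unsnoc_snoc e k : unsnoc (snoc e k) = e.
Proof.
by apply/ffunP => j; apply: val_inj; rewrite ffunE snoc_lift lift_max val_insubd ltn_ord.
Qed.

Lemma snoc_unsnoc (f : {ffun 'I_n.+1 -> 'I_n.+1}) :
  is_invseq f -> snoc (unsnoc f) (f ord_max) = f.
Proof.
move=> /forallP f_inv; apply/ffunP => i.
case: (unliftP ord_max i) => [j ->|->]; last by rewrite snoc_max.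
apply: ord_inj; rewrite snoc_lift ffunE lift_max val_insubd.
by rewrite (leq_ltn_trans (f_inv _)) ?lift_max.
Qed.

Lemma big_invseq_snoc (R : nmodType) (F : {ffun 'I_n.+1 -> 'I_n.+1} -> R) :
  \sum_(f | is_invseq f && avoids_gege f) F f =
  \sum_(e | is_invseq e && avoids_gege e) \sum_(k : 'I_n.+1 | (beta1 e <= k)%N) F (snoc e k).
Proof.
rewrite pair_big_dep /= (reindex_onto (fun ek => snoc ek.1 ek.2)
  (fun f => (unsnoc f, f ord_max))) /=; last first.
  by move=> f /andP[/snoc_unsnoc].
apply: eq_bigl => -[e k] /=.
by rewrite unsnoc_snoc snoc_max invseq_snoc avoids_snoc !eqxx andbT andbA.
Qed.

Lemma alpha_lt e : (0 < n)%N -> (alpha e < n)%N.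
Proof. by move=> n_gt0; rewrite alpha_ltE //; apply/forallP => j. Qed.

Lemma beta1_le_alpha e : (beta1 e <= (alpha e).+1)%N.
Proof. by apply/bigmax_leqP => i _; rewrite ltnS; apply: leq_bigmax. Qed.

Lemma sum_snoc_weights (R : comPzRingType) (U V : R) e : (0 < n)%N ->
  \sum_(k : 'I_n.+1 | (beta1 e <= k)%N) U ^+ par_p (snoc e k) * V ^+ par_q (snoc e k) =
  V ^+ (par_q e).+1 * \sum_(i < par_p e) U ^+ i +
  U ^+ (par_p e).+1 * V * \sum_(i < par_q e) U ^+ ((par_q e).-1 - i) * V ^+ i.
Proof.
move=> n_gt0; have lt_an := alpha_lt e n_gt0; have le_ba := beta1_le_alpha e.
rewrite /par_p /par_q; set a := alpha e; set b := beta1 e.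
(* a last entry k <= alpha e is the largest entry that is not a left-to-right
   maximum, while k > alpha e is the new maximum *)
pose f (k : nat) := if (k <= a)%N then U ^+ (a - k) * V ^+ (n.+1 - a)
                    else U ^+ (k.+1 - b) * V ^+ (n.+1 - k).
rewrite (eq_bigr (fun k : 'I_n.+1 => f k)) => [|k le_bk]; last first.
  rewrite alpha_snoc beta1_snoc // -/a -/b /f; case: leqP => [le_ka|lt_ak].
  - by rewrite (maxn_idPr (leqW le_bk)) subSS.
  - by rewrite maxn0.
have -> : \sum_(k < n.+1 | (b <= k)%N) f k = \sum_(b <= k < n.+1) f k.
  by rewrite big_geq_mkord.
rewrite (big_cat_nat _ (n := a.+1)) //=; last exact: ltnW.
rewrite !big_rev_mkord !mulr_sumr; congr (_ + _).
- apply: eq_bigr => i _; have lt_i := ltn_ord i.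
  rewrite /f ifT; last by rewrite subSS leq_subr.
  have -> : (a - (a.+1 - i.+1) = i)%N by lia.
  by rewrite mulrC subSn // ltnW.
- apply: eq_bigr => i _; have lt_i := ltn_ord i; rewrite /f ifF; last first.
    apply/negbTE; rewrite -ltnNge; lia.
  have -> : ((n.+1 - i.+1).+1 - b = (a.+1 - b).+1 + ((n - a).-1 - i))%N by lia.
  have -> : (n.+1 - (n.+1 - i.+1) = i.+1)%N by lia.
  by rewrite exprD !exprS; ring.
Qed.

End Snoc.

(** * The functional equation *)

Definition Ecoef_at (R : comPzRingType) n (U V : R) : R :=
  \sum_(e : {ffun 'I_n -> 'I_n} | [&& (0 < n)%N, is_invseq e & avoids_gege e])
     U ^+ par_p e * V ^+ par_q e.

Section EcoefRecurrence.
Variable R : comPzRingType.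
Implicit Types U V : R.

Lemma Ecoef_at0 U V : Ecoef_at 0 U V = 0.
Proof. by rewrite /Ecoef_at big_pred0. Qed.

Lemma Ecoef_at1 U V : Ecoef_at 1 U V = U * V.
Proof.
pose e0 : {ffun 'I_1 -> 'I_1} := [ffun => ord0].
have e0_uniq e : e = e0 by apply/ffunP => i; rewrite !ord1.
rewrite /Ecoef_at (big_pred1 e0) => [|e]; last first.
  rewrite [e]e0_uniq /= eqxx; apply/andP; split; apply/forallP => i.
    by rewrite ffunE.
  by apply/forallP => j; apply/forallP => l; rewrite [i]ord1 [j]ord1.
have ltrmax0 : ltrmax e0 ord0 by apply/forallP => j; rewrite [j]ord1.
rewrite /par_p /par_q /beta1 big_mkcond big_ord1 ltrmax0 /alpha big_ord1 ffunE.
by rewrite !expr1.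
Qed.

(* [t^(n+1)] of the functional equation for E, multiplied by (1-U)(U-V). *)
Lemma Ecoef_at_succ n U V :
  (1 - U) * (U - V) * Ecoef_at n.+1 U V =
  (n == 0)%:R * (U * V * (1 - U) * (U - V))
  + V * (U - V) * (Ecoef_at n 1 V - Ecoef_at n U V)
  + U * V * (1 - U) * (Ecoef_at n U U - Ecoef_at n U V).
Proof.
case: n => [|n]; first by rewrite Ecoef_at1 !Ecoef_at0 /=; ring.
rewrite /Ecoef_at /= (big_invseq_snoc (fun f => U ^+ par_p f * V ^+ par_q f)).
rewrite mul0r add0r mulr_sumr -!sumrB !mulr_sumr -big_split /=.
apply: eq_bigr => e _; rewrite sum_snoc_weights //.
set p := par_p e; set q := par_q e.
rewrite expr1n mul1r.
transitivity ((V - U) * V ^+ q.+1 * ((U - 1) * \sum_(i < p) U ^+ i)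
  + (1 - U) * U ^+ p.+1 * V * ((U - V) * \sum_(i < q) U ^+ (q.-1 - i) * V ^+ i)).
  by ring.
by rewrite -subrX1 -subrXX !exprS; ring.
Qed.

End EcoefRecurrence.

Lemma Ecoef_at_morph (R S : comPzRingType) (f : {rmorphism R -> S}) n (U V : R) :
  f (Ecoef_at n U V) = Ecoef_at n (f U) (f V).
Proof.
by rewrite rmorph_sum; apply: eq_bigr => e _; rewrite rmorphM !rmorphXn.
Qed.

(** * The kernel method *)

Lemma dvdXnP (K : fieldType) m (p : {poly K}) :
  reflect (forall i, (i < m)%N -> p`_i = 0) ('X^m %| p).
Proof.
apply: (iffP idP) => [/dvdpP[q ->] i lt_im | p_low]; first by rewrite coefMXn lt_im.
have take0 : take_poly m p = 0.
  by apply/polyP => i; rewrite coef_take_poly coef0; case: ifP => // /p_low.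
by rewrite -(poly_take_drop m p) take0 add0r dvdp_mull.
Qed.

Lemma dvdp_congr (K : idomainType) (d p q : {poly K}) : p = q -> d %| p -> d %| q.
Proof. by move->. Qed.

Definition Etrunc (R : comNzRingType) m (U V : {poly R}) : {poly R} :=
  \sum_(i < m) 'X^i * Ecoef_at i U V.

Lemma EtruncS (R : comNzRingType) m (U V : {poly R}) :
  Etrunc m.+1 U V = Etrunc m U V + 'X^m * Ecoef_at m U V.
Proof. exact: big_ord_recr. Qed.

Lemma Etrunc_succ (R : comNzRingType) m (U V : {poly R}) : (0 < m)%N ->
  (1 - U) * (U - V) * Etrunc m.+1 U V =
  'X * (U * V * (1 - U) * (U - V) + V * (U - V) * (Etrunc m 1 V - Etrunc m U V)
        + U * V * (1 - U) * (Etrunc m U U - Etrunc m U V)).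
Proof.
move=> m_gt0; rewrite /Etrunc big_ord_recl Ecoef_at0 mulr0 add0r.
transitivity ('X * \sum_(i < m) 'X^i * ((1 - U) * (U - V) * Ecoef_at i.+1 U V)).
  by rewrite !mulr_sumr; apply: eq_bigr => i _; rewrite lift0 exprS; ring.
under eq_bigr => i _ do rewrite Ecoef_at_succ -addrA mulrDr.
rewrite big_split /= -addrA; congr (_ * (_ + _)).
  case: m m_gt0 => // m _; rewrite big_ord_recl big1 => [|i _]; last first.
    by rewrite lift0 mul0r mulr0.
  by rewrite expr0 !mul1r addr0.
by rewrite -!sumrB !mulr_sumr -big_split; apply: eq_bigr => i _ /=; ring.
Qed.

Lemma coef_Etrunc (K : comNzRingType) m (c d : K) n : (n < m)%N ->
  (Etrunc m c%:P d%:P)`_n = Ecoef_at n c d.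
Proof.
move=> lt_nm; rewrite /Etrunc coef_sum (bigD1 (Ordinal lt_nm)) //= big1 ?addr0.
  by rewrite -(Ecoef_at_morph (@polyC K)) coefXnM ltnn subnn coefC.
move=> i ne_in; rewrite -(Ecoef_at_morph (@polyC K)) coefXnM coefC.
case: ltnP => // le_ni; rewrite subn_eq0; case: leqP => // le_in.
by case/eqP: ne_in; apply: val_inj; apply/eqP; rewrite /= eqn_leq le_in le_ni.
Qed.

Section KernelMethod.
Variable K : fieldType.
Implicit Types a b : {poly K}.

Definition kernel_pair m a b := 'X^m %| a * b - 'X * (1 + a) * (1 + b) * (a + b).

Lemma kernel_pairC m a b : kernel_pair m a b -> kernel_pair m b a.
Proof. by rewrite /kernel_pair; congr (_ %| _); ring. Qed.

Lemma coprimep_Xn m (p : {poly K}) : ~~ root p 0 -> coprimep 'X^m p.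
Proof. by move=> p0; rewrite coprimep_sym coprimep_expr // coprimepX. Qed.

Lemma kernel_identity m a b : (0 < m)%N -> kernel_pair m.+1 a b ->
  ~~ root (1 + a) 0 -> ~~ root (1 + b) 0 ->
  'X^m %| b * Etrunc m 1 ((1 + a) * (1 + b)) + a * Etrunc m (1 + a) (1 + a)
          - a * b * (1 + a).
Proof.
move=> m_gt0; rewrite /kernel_pair => ker a0 b0.
have rec := Etrunc_succ (1 + a) ((1 + a) * (1 + b)) m_gt0.
rewrite EtruncS in rec.
set N := a * b - _ in ker.
move: (Etrunc m (1 + a) _) (Etrunc m 1 _) (Etrunc m (1 + a) (1 + a))
      (Ecoef_at m _ _) rec => T G D E.
set L := (1 - (1 + a)) * _ * _; set R := 'X * _ => rec.
set Q := b * G + a * D - a * b * (1 + a).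
(* at U = 1 + a, V = (1 + a) (1 + b), the kernel in [rec] is (1 + a) N *)
have key : 'X * ((1 + a) ^+ 2 * (1 + b) * Q) =
  - ((1 + a) * (T + 'X^m * E) * N)
  - 'X * 'X^m * ((1 + a) ^+ 2 * (1 + b) * (a + b) * E) + (L - R).
  by rewrite /L /R /Q /N; ring.
rewrite rec subrr addr0 -exprS in key.
have : 'X^(m.+1) %| 'X * ((1 + a) ^+ 2 * (1 + b) * Q).
  by rewrite key; apply: dvdp_sub; [rewrite dvdpNr dvdp_mull | apply: dvdp_mulIl].
rewrite exprS dvdp_mul2l ?polyX_eq0 // Gauss_dvdpr //.
by rewrite coprimep_Xn // !rootM (negbTE a0) (negbTE b0).
Qed.

Lemma kernel_identity_antisym m a b : (0 < m)%N ->
  kernel_pair m.+1 a b -> ~~ root (1 + a) 0 -> ~~ root (1 + b) 0 ->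
  'X^m %| a ^+ 2 * Etrunc m (1 + a) (1 + a) - b ^+ 2 * Etrunc m (1 + b) (1 + b)
          - a * b * (a * (1 + a) - b * (1 + b)).
Proof.
move=> m_gt0 ker a0 b0.
have kab := kernel_identity m_gt0 ker a0 b0.
have kba := kernel_identity m_gt0 (kernel_pairC ker) b0 a0.
rewrite [(1 + b) * _]mulrC in kba.
move: (Etrunc m 1 _) (Etrunc m (1 + a) _) (Etrunc m (1 + b) _) kab kba => G Da Db kab kba.
have -> : a ^+ 2 * Da - b ^+ 2 * Db - a * b * (a * (1 + a) - b * (1 + b)) =
  a * (b * G + a * Da - a * b * (1 + a)) - b * (a * G + b * Db - b * a * (1 + b)).
  by ring.
by apply: dvdp_sub; apply: dvdp_mull.
Qed.

End KernelMethod.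

(** * The pairs (x, Y), (Y, xbar Y) and (xbar Y, xbar) *)

Definition trunc (K : nzRingType) m (s : nat -> K) : {poly K} := \poly_(i < m) s i.

Lemma coef_trunc (K : nzRingType) (s : nat -> K) m i : (i < m)%N -> (trunc m s)`_i = s i.
Proof. by move=> lt_im; rewrite coef_poly lt_im. Qed.

Definition conv (K : nzRingType) (a b : nat -> K) n : K :=
  \sum_(i < n.+1) a i * b (n - i)%N.

Lemma coefM_conv (K : nzRingType) (a b : nat -> K) (p q : {poly K}) n :
  (forall i, (i <= n)%N -> p`_i = a i) -> (forall i, (i <= n)%N -> q`_i = b i) ->
  forall i, (i <= n)%N -> (p * q)`_i = conv a b i.
Proof.
move=> pa qb i le_in; rewrite coefM; apply: eq_bigr => j _.
have le_jn : (j <= n)%N by rewrite (leq_trans _ le_in) // -ltnS.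
by rewrite pa // qb // (leq_trans (leq_subr _ _) le_in).
Qed.

(* Written like [Rser], so that [Rser Y n] and [Rcoef xF Y n] are convertible. *)
Definition Rcoef (K : fieldType) (x : K) (Y : nat -> K) n : K :=
  let Y2 := conv Y Y in let Y3 := conv Y2 Y in let Y4 := conv Y3 Y in
  (x + 1 - x^-1 ^+ 5 - x^-1 ^+ 6) * Y n + (x^-1 ^+ 5 - x^-1) * Y2 n
  + ((x^-1 ^+ 3 + x^-1 ^+ 6 - x^-1 - x^-1 ^+ 4) * Y3 n + (x^-1 ^+ 3 - x^-1 ^+ 5) * Y4 n).

Section Specialization.
Variable K : fieldType.
Variable x : K.
Hypotheses (x_neq0 : x != 0) (one_add_x_neq0 : 1 + x != 0).
Variable Y : nat -> K.
Hypothesis Y0 : Y 0 = 0.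
Hypothesis Y_rec : forall n,
  Y n.+1 = (1 + x^-1) * conv (fun i => (i == 0)%:R + Y i) (fun i => x *+ (i == 0) + Y i) n.

Local Notation xP := (x%:P : {poly K}).
Local Notation xbP := (x^-1%:P : {poly K}).
Local Notation Yt M := (trunc M.+1 Y).

Lemma trunc_Y_kernel m :
  'X^m %| trunc m Y - 'X * (1 + xbP) * (1 + trunc m Y) * (xP + trunc m Y).
Proof.
apply/dvdXnP => i lt_im; rewrite coefB -!mulrA coefXM coef_trunc //.
case: i lt_im => [|j] lt_jm; first by rewrite Y0 subr0.
rewrite Y_rec -polyC1 -polyCD coefCM (coefM_conv (a := fun i => (i == 0)%:R + Y i)
  (b := fun i => x *+ (i == 0) + Y i) _ _ (leqnn j)) ?subrr // => i le_ij.
  by rewrite coefD coef1 coef_trunc // (leq_ltn_trans le_ij (ltnW lt_jm)).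
by rewrite coefD coefC -mulrb coef_trunc // (leq_ltn_trans le_ij (ltnW lt_jm)).
Qed.

Lemma coef0_trunc m : (trunc m Y)`_0 = 0.
Proof. by rewrite coef_poly Y0 if_same. Qed.

Lemma not_root0_add1 (p : {poly K}) : p`_0 = 0 -> ~~ root (1 + p) 0.
Proof. by move=> p0; rewrite /root horner_coef0 coefD coef1 p0 addr0 oner_eq0. Qed.

Lemma one_add_invx_neq0 : 1 + x^-1 != 0.
Proof.
apply: contraNneq one_add_x_neq0 => x1_0.
by rewrite -[x]mulr1 -{1}(mulfV x_neq0) -mulrDr [_ + 1]addrC x1_0 mulr0.
Qed.

Lemma mulV_xP : xbP * xP = 1.
Proof. by rewrite -polyCM mulVf // polyC1. Qed.

Lemma kernel_pair_of_Y_kernel m a b (c : {poly K}) :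
  a * b - 'X * (1 + a) * (1 + b) * (a + b) =
    c * (trunc m Y - 'X * (1 + xbP) * (1 + trunc m Y) * (xP + trunc m Y)) ->
  kernel_pair m a b.
Proof. by rewrite /kernel_pair => ->; apply: dvdp_mull; apply: trunc_Y_kernel. Qed.

Lemma kernel_pair_x_Y m : kernel_pair m xP (trunc m Y).
Proof.
apply: (kernel_pair_of_Y_kernel (c := xP)).
have -> : 1 + xP = xP * (1 + xbP) by rewrite mulrDr mulr1 mulrC mulV_xP addrC.
by ring.
Qed.

Lemma one_add_xbP_mul (p : {poly K}) : 1 + xbP * p = xbP * (xP + p).
Proof. by rewrite mulrDr mulV_xP. Qed.

Lemma kernel_pair_Y_xbY m : kernel_pair m (trunc m Y) (xbP * trunc m Y).
Proof.
apply: (kernel_pair_of_Y_kernel (c := xbP * trunc m Y)).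
by rewrite one_add_xbP_mul; ring.
Qed.

Lemma kernel_pair_xbY_xb m : kernel_pair m (xbP * trunc m Y) xbP.
Proof.
apply: (kernel_pair_of_Y_kernel (c := xbP ^+ 2)).
by rewrite one_add_xbP_mul; ring.
Qed.

(* The right-hand side is x^2 R(x, Y) with every x^2 xbar^k reduced to
   xbar^(k-2), which makes the sum of the three identities a ring identity. *)
Lemma kernel_telescope M : (0 < M)%N ->
  'X^M %| xP ^+ 2 * Etrunc M (1 + xP) (1 + xP) - xbP ^+ 2 * Etrunc M (1 + xbP) (1 + xbP)
          - ((x ^+ 3 + x ^+ 2 - x^-1 ^+ 3 - x^-1 ^+ 4)%:P * Yt M
             + (x^-1 ^+ 3 - x)%:P * (Yt M * Yt M)
             + (x^-1 + x^-1 ^+ 4 - x - x^-1 ^+ 2)%:P * (Yt M * Yt M * Yt M)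
             + (x^-1 - x^-1 ^+ 3)%:P * (Yt M * Yt M * Yt M * Yt M)).
Proof.
move=> M_gt0.
have y0 := not_root0_add1 (coef0_trunc M.+1).
have xby0 : ~~ root (1 + xbP * Yt M) 0.
  by rewrite not_root0_add1 // coefCM coef0_trunc mulr0.
have x0 : ~~ root (1 + xP) 0 by rewrite /root -polyC1 -polyCD hornerC.
have xb0 : ~~ root (1 + xbP) 0 by rewrite /root -polyC1 -polyCD hornerC one_add_invx_neq0.
have k1 := kernel_identity_antisym M_gt0 (kernel_pair_x_Y _) x0 y0.
have k2 := kernel_identity_antisym M_gt0 (kernel_pair_Y_xbY _) y0 xby0.
have k3 := kernel_identity_antisym M_gt0 (kernel_pair_xbY_xb _) xby0 xb0.
apply: dvdp_congr (dvdp_add (dvdp_add k1 k2) k3); ring.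
Qed.

Lemma Rcoef_identity n :
  Rcoef x Y n =
  Ecoef_at n (1 + x) (1 + x) - x^-1 ^+ 4 * Ecoef_at n (1 + x^-1) (1 + x^-1).
Proof.
have := dvdXnP _ _ (kernel_telescope (M := n.+1) isT) n (ltnSn n).
have Y1 i : (i <= n)%N -> (Yt n.+1)`_i = Y i.
  by move=> le_in; rewrite coef_trunc // ltnS ltnW.
have Y2 := coefM_conv Y1 Y1; have Y3 := coefM_conv Y2 Y1; have Y4 := coefM_conv Y3 Y1.
rewrite -!polyC1 -!polyCD -!rmorphXn !coefB !coefD !coefCM !coef_Etrunc //.
rewrite Y1 // Y2 // Y3 // Y4 // => /eqP; rewrite subr_eq0 => /eqP main.
move: (Ecoef_at n (1 + x) _) (Ecoef_at n (1 + x^-1) _) main => E E' main.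
apply: (mulfI (expf_neq0 2 x_neq0)).
have -> : x ^+ 2 * (E - x^-1 ^+ 4 * E') = x ^+ 2 * E - x^-1 ^+ 2 * E' by field.
by rewrite main /Rcoef; field.
Qed.

End Specialization.

Lemma xF_neq0 : xF != 0.
Proof. by rewrite /xF /toF tofrac_eq0 polyX_eq0. Qed.

Lemma one_add_xF_neq0 : 1 + xF != 0.
Proof.
rewrite /xF /toF -tofrac1 -tofracD tofrac_eq0.
by apply/eqP => /(congr1 (coefp 1)); rewrite /= coefD coef1 coefX coef0 add0r => /eqP; rewrite oner_eq0.
Qed.

Lemma Y_eq_rec (Y : series) : Y_eq Y -> forall n,
  Y n.+1 = (1 + xF^-1) * conv (fun i => (i == 0)%:R + Y i) (fun i => xF *+ (i == 0) + Y i) n.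
Proof.
move=> hY n; rewrite hY; congr (_ * _); apply: eq_bigr => i _.
by rewrite /sadd /sconst; case: (n - i)%N; case: (nat_of_ord i).
Qed.

Lemma Ecoef_Ecoef_at n : Ecoef n = Ecoef_at n ('X : {poly {poly rat}}) ('X : {poly rat})%:P.
Proof. by apply: eq_bigr => e _; rewrite rmorphXn. Qed.

Lemma toF_eval2_Ecoef n :
  toF (eval2 (Ecoef n) ('X + 1) ('X + 1)) = Ecoef_at n (1 + xF) (1 + xF).
Proof.
have -> : toF (eval2 (Ecoef n) ('X + 1) ('X + 1)) =
  (@tofrac _ \o horner_eval ('X + 1) \o map_poly (comp_poly ('X + 1))) (Ecoef n) by [].
rewrite Ecoef_Ecoef_at Ecoef_at_morph /= /horner_eval map_polyX map_polyC /=.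
by rewrite hornerX hornerC comp_polyX rmorphD rmorph1 addrC.
Qed.

Lemma horner_xbF_Ecoef n :
  (map_poly (fun c : rat => toF c%:P) (- ('X ^+ 3 * Ecoef_at n (1 + 'X) (1 + 'X)))).[xbF] =
  - (xbF ^+ 3 * Ecoef_at n (1 + xbF) (1 + xbF)).
Proof.
have -> : forall q : {poly rat}, (map_poly (fun c : rat => toF c%:P) q).[xbF] =
  (horner_eval xbF \o map_poly (@tofrac _ \o polyC)) q by [].
have eX : (horner_eval xbF \o map_poly (@tofrac _ \o polyC)) 'X = xbF.
  by rewrite /= /horner_eval map_polyX hornerX.
have e1 : (horner_eval xbF \o map_poly (@tofrac _ \o polyC)) (1 + 'X) = 1 + xbF.
  by rewrite rmorphD rmorph1; congr (1 + _); exact: eX.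
by rewrite rmorphN rmorphM rmorphXn Ecoef_at_morph; congr (- (_ ^+ 3 * Ecoef_at n _ _)).
Qed.

Theorem theorem3p1 (Y : series) :
  Y_eq Y ->
  forall n : nat,
    is_PT (Rser Y n) (eval2 (Ecoef n) ('X + 1) ('X + 1)).
Proof.
move=> hY n.
have hY0 : Y 0 = 0 by rewrite hY.
have hR := Rcoef_identity xF_neq0 one_add_xF_neq0 hY0 (Y_eq_rec hY) n.
exists (- ('X ^+ 3 * Ecoef_at n (1 + 'X) (1 + 'X))).
rewrite toF_eval2_Ecoef horner_xbF_Ecoef.
have -> : Rser Y n = Rcoef xF Y n by [].
by rewrite hR /xbF; ring.
Qed.
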